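(* For every $N\in\mathbb{N}$, with $\pi_N$ the law of the number of fixed points of a uniformly random permutation of $\{1,\dots,N\}$ and $\mathcal{P}$ the Poisson law of parameter $1$, $$\|\pi_N-\mathcal{P}\|_{\mathrm{tv}}\le\frac{2^{N+1}}{(N+1)!}.$$
   Context: $\|\mu-\mu'\|_{\mathrm{tv}}=\sup_{A\subset\mathbb{Z}_+}|\mu(A)-\mu'(A)|=\sum_n(\mu(n)-\mu'(n))_+$. *)

From HB Require Import structures.
From mathcomp Require Import all_boot all_order all_algebra all_fingroup.
From mathcomp Require Import all_classical all_reals all_analysis.
Set Implicit Arguments. Unset Strict Implicit. Unset Printing Implicit Defensive.
Import Order.TTheory GRing.Theory Num.Theory.
Local Open Scope ring_scope.

Definition nfix (N : nat) (s : 'S_N) : nat := #|[set i : 'I_N | s i == i]|.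

Definition piN (R : realType) (N : nat) (k : nat) : R :=
  (#|[set s : 'S_N | nfix s == k]|%:R) / (N`!)%:R.

Definition poisson1 (R : realType) (k : nat) : R := expR (-1) / (k`!)%:R.

Definition tv (R : realType) (mu nu : nat -> R) : R :=
  \big[+%R/0%R]_(0 <= n <oo) Num.max (mu n - nu n) 0.

(* Write F(s) for the set of fixed points of a permutation s of a finite set T
   of size N.  Counting pairs (s, J) with J a j-subset of F(s) gives the
   factorial moments  sum_s C(|F(s)|, j) = C(N, j) (N - j)!.  Binomial
   inversion turns these moments into the exact law
       pi_N(k) = (1/k!) * sum_(i <= N - k) (-1)^i / i!,
   a partial sum of the exponential series at -1.  Since that series
   alternates with decreasing terms, its partial sums of even length stay
   below e^-1, whence pi_N(k) - e^-1/k! <= 1/(k! (N - k + 1)!) for k <= N.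
   For k > N the difference is negative, so the total variation distance is a
   finite sum bounded by  sum_(k <= N) 1/(k! (N + 1 - k)!)
   = (2^(N+1) - 1)/(N + 1)!  <=  2^(N+1)/(N + 1)!. *)

From mathcomp Require Import all_boot all_order all_algebra all_fingroup.
From mathcomp Require Import all_classical all_reals all_analysis.
From mathcomp Require Import ring lra.
Import Order.TTheory GRing.Theory Num.Theory.
Set Implicit Arguments.
Unset Strict Implicit.
Unset Printing Implicit Defensive.
Local Open Scope ring_scope.

Section FixedPointMoments.
Variable T : finType.

Definition fixset (s : {perm T}) : {set T} := [set x | s x == x].

Lemma subset_fixsetE (J : {set T}) (s : {perm T}) :
  (J \subset fixset s) = perm_on (~: J) s.
Proof.
apply/fintype.subsetP/fintype.subsetP => [Jfix x | sJ x xJ].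
  by rewrite !inE; apply: contraNN => /Jfix; rewrite inE.
by rewrite inE; apply: contraTT xJ => /sJ; rewrite inE.
Qed.

(* Double counting of pairs (s, J) with J a j-subset of the fixed points of s:
   each of the C(|T|, j) sets J is fixed by the (|T| - j)! permutations of its
   complement. *)
Lemma sum_bin_card_fixset j : (j <= #|T|)%N ->
  (\sum_(s : {perm T}) 'C(#|fixset s|, j) = 'C(#|T|, j) * (#|T| - j)`!)%N.
Proof.
move=> jT.
have count_subsets s :
    'C(#|fixset s|, j) = (\sum_(J : {set T} | #|J| == j) (J \subset fixset s))%N.
  rewrite -cards_draws -sum1_card big_mkcond [RHS]big_mkcond.
  by apply: eq_bigr => J _; rewrite inE; case: (J \subset _); case: (_ == j).
have count_perms (J : {set T}) : #|J| = j ->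
    (\sum_(s : {perm T}) (J \subset fixset s))%N = (#|T| - j)`!.
  move=> cardJ; transitivity (\sum_(s | perm_on (~: J) s) 1)%N.
    rewrite [RHS]big_mkcond; apply: eq_bigr => s _.
    by rewrite subset_fixsetE; case: perm_on.
  by rewrite sum1dep_card cardsE card_perm -(cardsC J) cardJ addKn.
under eq_bigr do rewrite count_subsets.
rewrite exchange_big /=.
rewrite (eq_bigr (fun _ => (#|T| - j)`!)) => [|J /eqP]; last exact: count_perms.
by rewrite sum_nat_const -card_draws cardsE.
Qed.
End FixedPointMoments.

(* Choosing an (k + i)-subset of an m-set and then a k-subset of it is the
   same as choosing the k-subset first and then i further elements. *)
Lemma bin_choose_twice m k i : (k + i <= m)%N ->
  ('C(k + i, k) * 'C(m, k + i) = 'C(m, k) * 'C(m - k, i))%N.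
Proof.
move=> kim; have km : (k <= m)%N := leq_trans (leq_addr i k) kim.
have im : (i <= m - k)%N by rewrite leq_subRL // addnC.
have Cki := bin_fact (leq_addr i k); rewrite addKn in Cki.
have Cm_ki := bin_fact kim; rewrite subnDA in Cm_ki.
have Cmk := bin_fact km; have Cm_k := bin_fact im.
apply/eqP; rewrite -(@eqn_pmul2r (k`! * i`! * (m - k - i)`!)) ?muln_gt0 ?fact_gt0 //.
have -> : ('C(k + i, k) * 'C(m, k + i) * (k`! * i`! * (m - k - i)`!) =
   'C(m, k + i) * ('C(k + i, k) * (k`! * i`!) * (m - k - i)`!))%N by ring.
have -> : ('C(m, k) * 'C(m - k, i) * (k`! * i`! * (m - k - i)`!) =
   'C(m, k) * (k`! * ('C(m - k, i) * (i`! * (m - k - i)`!))))%N by ring.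
by rewrite Cki Cm_ki Cm_k Cmk.
Qed.

(* sum_i (-1)^i C(n, i) = (1 - 1)^n. *)
Lemma alternating_bin_sum (R : comPzRingType) n :
  \sum_(i < n.+1) (-1) ^+ i * 'C(n, i)%:R = (n == 0)%N%:R :> R.
Proof.
have := exprBn (1 : R) 1 n; rewrite subrr expr0n => ->.
by apply: eq_bigr => i _; rewrite !expr1n !mulr1 mulr_natr.
Qed.

(* Binomial inversion: the matrix (C(m, j))_(m, j) is inverted by
   ((-1)^(j - k) C(j, k))_(j, k); the upper bound M only pads the sum with
   zero terms, so that it can be taken uniformly in m. *)
Lemma binomial_inversion (R : comPzRingType) (m k M : nat) : (m <= M)%N ->
  \sum_(j < M.+1) (-1) ^+ (j - k) * 'C(j, k)%:R * 'C(m, j)%:R = (m == k)%:R :> R.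
Proof.
move=> mM; set F := fun j => (-1) ^+ (j - k) * 'C(j, k)%:R * 'C(m, j)%:R : R.
have [km | mk] := leqP k m; last first.
  rewrite (ltn_eqF mk) big1 // => j _; rewrite /F.
  have [kj | jk] := leqP k j; last by rewrite bin_small // mulr0 mul0r.
  by rewrite (@bin_small m j) ?mulr0 // (leq_trans mk kj).
(* Only the indices k <= j <= m contribute; write them j = k + i. *)
rewrite -(big_mkord xpredT F) (big_cat_nat (leq0n k) (leq_trans km (leqW mM))) /=.
rewrite big_nat_cond big1 ?add0r => [|j /andP[/andP[_ jk] _]]; last first.
  by rewrite /F bin_small // mulr0 mul0r.
rewrite (big_cat_nat (leqW km) (mM : (m.+1 <= M.+1)%N)) /=.
rewrite [X in _ + X]big_nat_cond [X in _ + X]big1 ?addr0 => [|j /andP[/andP[mj _] _]];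
  last by rewrite /F (@bin_small m j) // mulr0.
rewrite -{1}(add0n k) big_addn subSn // big_mkord.
have middle_term (i : 'I_(m - k).+1) :
    F (i + k)%N = 'C(m, k)%:R * ((-1) ^+ i * 'C(m - k, i)%:R).
  have kim : (k + i <= m)%N by have := ltn_ord i; rewrite ltnS leq_subRL.
  rewrite /F addnK (addnC i k) -mulrA -natrM bin_choose_twice // natrM.
  by rewrite mulrCA.
rewrite (eq_bigr _ (fun i _ => middle_term i)) -big_distrr /= alternating_bin_sum.
rewrite subn_eq0 eqn_leq km andbT.
have [mk | _] := leqP m k; last by rewrite mulr0.
have -> : m = k by apply/anti_leq; rewrite mk km.
by rewrite binn mulr1.
Qed.

(* Inclusion-exclusion count of the permutations with exactly k fixed points,
   obtained by inverting the factorial moments. *)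
Lemma card_fixset_eq (R : comPzRingType) (T : finType) k :
  #|[set s : {perm T} | #|fixset s| == k]|%:R =
  \sum_(j < #|T|.+1) (-1) ^+ (j - k) * 'C(j, k)%:R * ('C(#|T|, j) * (#|T| - j)`!)%:R :> R.
Proof.
rewrite -sum1dep_card natr_sum big_mkcond /=.
rewrite (eq_bigr (fun s : {perm T} =>
    \sum_(j < #|T|.+1) (-1) ^+ (j - k) * 'C(j, k)%:R * 'C(#|fixset s|, j)%:R)); last first.
  by move=> s _; rewrite binomial_inversion ?max_card //; case: (_ == k).
rewrite exchange_big /=; apply: eq_bigr => j _.
by rewrite -big_distrr /= -natr_sum sum_bin_card_fixset // -ltnS.
Qed.

Lemma bin_div_fact (R : numFieldType) n m : (m <= n)%N ->
  'C(n, m)%:R / n`!%:R = ((m`! * (n - m)`!)%:R)^-1 :> R.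
Proof.
move=> mn; rewrite -(bin_fact mn) natrM invfM mulrA mulfV ?mul1r //.
by rewrite pnatr_eq0 -lt0n bin_gt0.
Qed.

Lemma piN_alternating (R : realType) N k : (k <= N)%N ->
  piN R N k = (k`!%:R)^-1 * series (exp_coeff (-1 : R)) (N - k).+1.
Proof.
move=> kN; rewrite /piN card_fixset_eq card_ord mulr_suml.
have weight (j : 'I_N.+1) :
    ('C(N, j) * (N - j)`!)%:R / N`!%:R = (j`!%:R)^-1 :> R.
  rewrite natrM mulrAC (bin_div_fact _ (ltn_ord j : (j <= N)%N)).
  by rewrite natrM invfM -mulrA mulVf ?mulr1 // pnatr_eq0 -lt0n fact_gt0.
rewrite (eq_bigr (fun j : 'I_N.+1 => (-1) ^+ (j - k) * 'C(j, k)%:R * (j`!%:R)^-1));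
  last by move=> j _; rewrite -weight mulrA.
rewrite -(big_mkord xpredT (fun j => (-1) ^+ (j - k) * 'C(j, k)%:R * (j`!%:R)^-1 : R)).
rewrite (big_cat_nat (leq0n k) (leqW kN)) /=.
rewrite big_nat_cond big1 ?add0r => [|j /andP[/andP[_ jk] _]]; last first.
  by rewrite bin_small // mulr0 mul0r.
rewrite -{1}(add0n k) big_addn subSn // /series /= big_distrr /=.
apply: eq_bigr => i _; rewrite addnK (addnC i k) -mulrA bin_div_fact ?leq_addr //.
by rewrite addKn natrM invfM /exp_coeff /= mulrCA.
Qed.

(* Partial sums of even positive length of the alternating series of e^-1 lie
   strictly below its limit, since consecutive pairs of later terms
   1/(2n)! - 1/(2n+1)! are positive. *)
Lemma exp_series_even_lt (R : realType) j :
  series (exp_coeff (-1 : R)) j.+1.*2 < expR (-1).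
Proof.
apply: lt_sum_lim_series; first exact: is_cvg_series_exp_coeff.
move=> d; set n := (j.+1.*2 + d.*2)%N.
have n_even : (-1 : R) ^+ n = 1 by rewrite /n -doubleD -mul2n exprM sqrrN !expr1n.
rewrite addnS -/n /exp_coeff /= exprS n_even mulr1 mulN1r mul1r subr_gt0.
by rewrite ltf_pV2 ?posrE ?ltr0n ?fact_gt0 // ltr_nat factS ltn_Pmull ?fact_gt0.
Qed.

(* Alternating-series estimate: a partial sum of length m + 1 exceeds e^-1 by
   at most the modulus 1/(m+1)! of the first omitted term. *)
Lemma exp_series_sub_expR_le (R : realType) m :
  series (exp_coeff (-1 : R)) m.+1 - expR (-1) <= (m.+1`!%:R)^-1.
Proof.
have bound_ge0 : 0 <= (m.+1`!%:R : R)^-1 by rewrite invr_ge0 ler0n.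
move: (odd_double_half m) bound_ge0; set j := m./2; case: (odd m) => /= <- bound_ge0.
  have := exp_series_even_lt R j; rewrite add1n -doubleS; lra.
have odd_step : series (exp_coeff (-1 : R)) j.+1.*2 =
    series (exp_coeff (-1)) j.*2.+1 - (j.*2.+1`!%:R)^-1.
  rewrite doubleS seriesSr /exp_coeff /= exprS -mul2n exprM sqrrN !expr1n.
  by rewrite mulr1 mulN1r.
have := exp_series_even_lt R j; rewrite odd_step add0n; lra.
Qed.

Lemma piN_sub_poisson_le (R : realType) N k : (k <= N)%N ->
  piN R N k - poisson1 R k <= ((k`! * (N - k).+1`!)%:R)^-1.
Proof.
move=> kN; rewrite piN_alternating // /poisson1 (mulrC (expR _)) -mulrBr.
rewrite natrM invfM ler_pM2l ?invr_gt0 ?ltr0n ?fact_gt0 //.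
exact: exp_series_sub_expR_le.
Qed.

(* No permutation of [N] has more than N fixed points. *)
Lemma piN_eq0 (R : realType) N k : (N < k)%N -> piN R N k = 0.
Proof.
move=> Nk; rewrite /piN (_ : #|_| = 0%N) ?mul0r //.
apply: eq_card0 => s; rewrite !inE; apply/negbTE.
by rewrite neq_ltn (leq_ltn_trans _ Nk) // /nfix -[X in (_ <= X)%N](card_ord N) max_card.
Qed.

Lemma poisson1_ge0 (R : realType) k : 0 <= poisson1 R k.
Proof. by rewrite /poisson1 divr_ge0 ?ler0n // ltW // expR_gt0. Qed.

(* If mu <= nu from M on, the series defining tv mu nu is eventually constant,
   hence equals its partial sum of length M. *)
Lemma tv_finite_support (R : realType) (mu nu : nat -> R) M :
  (forall n, (M <= n)%N -> mu n <= nu n) ->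
  tv mu nu = \sum_(0 <= n < M) Num.max (mu n - nu n) 0.
Proof.
move=> mu_le_nu; apply: norm_lim_near_cst; near=> n.
have Mn : (M <= n)%N by near: n; exact: nbhs_infty_ge.
rewrite (big_cat_nat (leq0n M) Mn) /= [X in _ + X]big_nat_cond.
rewrite [X in _ + X]big1 ?addr0 // => i /andP[/andP[Mi _] _].
by apply/max_r; rewrite subr_le0 mu_le_nu.
Unshelve. all: by end_near.
Qed.

(* sum_(k <= N) 1/(k! (N + 1 - k)!) = (2^(N+1) - 1)/(N + 1)!, by the binomial
   theorem for (1 + 1)^(N+1) with the term k = N + 1 left out. *)
Lemma sum_inv_fact_pairs (R : numFieldType) N :
  \sum_(k < N.+1) ((k`! * (N - k).+1`!)%:R : R)^-1 <= 2 ^+ N.+1 / (N.+1`!)%:R.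
Proof.
have sum_bin n : (\sum_(i < n.+1) 'C(n, i) = 2 ^ n)%N.
  by rewrite -(add1n 1) expnDn; apply: eq_bigr => i _; rewrite !exp1n !muln1.
have -> : 2 ^+ N.+1 / (N.+1`!)%:R = \sum_(k < N.+2) 'C(N.+1, k)%:R / (N.+1`!)%:R :> R.
  by rewrite -mulr_suml -natr_sum sum_bin natrX.
have term (k : 'I_N.+1) :
    ((k`! * (N - k).+1`!)%:R : R)^-1 = 'C(N.+1, k)%:R / (N.+1`!)%:R.
  have kN : (k <= N)%N := ltn_ord k.
  by rewrite bin_div_fact ?(leqW kN) // subSn.
rewrite (eq_bigr (fun k : 'I_N.+1 => 'C(N.+1, k)%:R / (N.+1`!)%:R)) => [|k _];
  last exact: term.
by rewrite [X in _ <= X]big_ord_recr lerDl divr_ge0 ?ler0n.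
Qed.

Theorem mainTheorem15 (R : realType) (N : nat) :
  tv (piN R N) (@poisson1 R) <= 2 ^+ N.+1 / (N.+1`!)%:R.
Proof.
rewrite (@tv_finite_support _ _ _ N.+1) => [|k Nk]; last first.
  by rewrite piN_eq0 // poisson1_ge0.
rewrite big_mkord; apply: le_trans (sum_inv_fact_pairs R N); apply: ler_sum => k _.
rewrite ge_max invr_ge0 ler0n andbT.
by apply: piN_sub_poisson_le; rewrite -ltnS.
Qed.
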